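(* Let $v\equiv 3$ or $15\pmod{18}$ and let $S=(\mathbb{Z}_v,\mathcal{B})$ be a cyclic $\mathrm{STS}(v)$ (with cyclic automorphism $i\mapsto i+1\bmod v$) having no full orbit of Type $3$. Then $S$ has no full orbit of Type $1$ (i.e. all full orbits are of Type $2$).
   Context: A Steiner triple system $\mathrm{STS}(v)$ is a pair $(X,\mathcal{B})$ with $|X|=v$ and $\mathcal{B}$ a collection of 3-subsets of $X$ such that every 2-subset lies in exactly one block. It is cyclic if (after relabeling) $X=\mathbb{Z}_v$ and the map $\alpha: i\mapsto i+1 \pmod v$ maps blocks to blocks. The blocks are partitioned into orbits under the group generated by $\alpha$; an orbit with $v$ blocks is a full orbit. For $v\equiv 3\pmod 6$ there is exactly one short orbit, the orbit of $\{0,v/3,2v/3\}$, of size $v/3$. When $3\mid v$, an orbit is of Type $i$ ($i=1,2,3$) if every block in it contains elements of exactly $i$ distinct residue classes modulo $3$. *)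

From mathcomp Require Import all_boot all_algebra.
Set Implicit Arguments. Unset Strict Implicit. Unset Printing Implicit Defensive.
Import GRing.Theory.
Local Open Scope ring_scope.

(* Points are Z_v ('Z_v, which is Z/vZ whenever 1 < v; the main theorem's
   hypothesis v = 3 or 15 mod 18 forces v >= 3). A block is a 3-subset. *)

Definition is_STS (v : nat) (B : {set {set 'Z_v}}) : Prop :=
  (forall b, b \in B -> #|b| = 3%N) /\
  (forall x y : 'Z_v, x != y ->
     #|[set b in B | (x \in b) && (y \in b)]| = 1%N).

Definition translate (v : nat) (b : {set 'Z_v}) (k : 'Z_v) : {set 'Z_v} :=
  [set x + k | x in b].

Definition is_cyclic (v : nat) (B : {set {set 'Z_v}}) : Prop :=
  forall b, b \in B -> translate b 1 \in B.

Definition block_orbit (v : nat) (b : {set 'Z_v}) : {set {set 'Z_v}} :=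
  [set translate b k | k : 'Z_v].

Definition full_orbit (v : nat) (b : {set 'Z_v}) : Prop :=
  #|block_orbit b| = v.

Definition n_classes (v : nat) (b : {set 'Z_v}) : nat :=
  size (undup [seq (nat_of_ord x %% 3)%N | x <- enum b]).

Definition orbit_of_type (v : nat) (O : {set {set 'Z_v}}) (i : nat) : Prop :=
  forall b, b \in O -> n_classes b = i.

From mathcomp Require Import all_boot all_algebra zify.
Import GRing.Theory.
Set Implicit Arguments. Unset Strict Implicit. Unset Printing Implicit Defensive.
Local Open Scope ring_scope.

(* Let v = 3m and let B be an STS(v) on Z_v.  We count the ordered pairs of
   distinct points lying in the same residue class mod 3 in two ways.
   - Directly, every point has m - 1 partners, so there are v(m - 1) of them;
     since every pair lies in exactly one block, this is also the sum over the
     blocks of the number of such pairs inside each block.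
   - A block whose orbit is full but not of Type 3 contains at least one such
     (unordered) pair, and a block of Type 1 contains three of them.
   - A block whose orbit is not full is fixed by some shift d != 0; summing
     its elements gives 3d = 0, so it is also fixed by the shift m.  Each point
     x lies in at most one block containing x and x + m, so at most m blocks
     are fixed by m; hence at most m blocks have a non-full orbit.
   With |B| = v(v - 1)/6 these three facts are incompatible as soon as one
   full orbit is of Type 1. *)

Lemma sum_indicator (T : finType) (A : {set T}) :
  (\sum_(x : T) (x \in A : nat))%N = #|A|.
Proof. by rewrite -sum1_card [RHS]big_mkcond. Qed.

Lemma card_set_in (T : finType) (B : {set T}) (P : pred T) :
  #|[set b in B | P b]| = (\sum_(b in B) P b)%N.
Proof.
rewrite -sum_indicator [RHS]big_mkcond /=.
by apply: eq_bigr => b _; rewrite inE; case: (b \in B).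
Qed.

Lemma sum_distinct (T : finType) (x : T) (P : pred T) : P x ->
  (\sum_(y : T) ((x != y) && P y : nat) = (\sum_(y : T) (P y : nat)) - 1)%N.
Proof.
move=> Px; rewrite [in RHS](bigD1 x) //= Px addKn (bigD1 x) //= eqxx add0n.
by apply: eq_bigr => y ney; rewrite eq_sym ney.
Qed.

Definition pair_count (T : finType) (b : {set T}) (Q : rel T) : nat :=
  (\sum_(x : T) \sum_(y : T) [&& x \in b, y \in b, x != y & Q x y])%N.

Lemma pair_count_all (T : finType) (b : {set T}) (Q : rel T) :
  {in b &, forall x y, Q x y} -> pair_count b Q = (#|b| * (#|b| - 1))%N.
Proof.
move=> Qb; rewrite /pair_count -{1}sum_indicator big_distrl /=.
apply: eq_bigr => x _; case: (boolP (x \in b)) => xb /=; last by rewrite big1.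
rewrite mul1n (cardsD1 x b) xb add1n subn1 /= -sum_indicator.
apply: eq_bigr => y _; rewrite !inE eq_sym.
by case: (boolP (y \in b)) => yb; rewrite ?andbF //= Qb ?andbT.
Qed.

Lemma pair_count_ge2 (T : finType) (b : {set T}) (Q : rel T) (x y : T) :
  x \in b -> y \in b -> x != y -> Q x y -> Q y x -> (2 <= pair_count b Q)%N.
Proof.
move=> xb yb nexy Qxy Qyx; rewrite /pair_count (bigD1 x) //=.
rewrite [X in (_ + X)%N](bigD1 y) /=; last by rewrite eq_sym.
rewrite addnA; apply: leq_trans _ (leq_addr _ _); rewrite -[2%N]/(1 + 1)%N; apply: leq_add.
- by rewrite (bigD1 y) //= xb yb nexy Qxy.
- by rewrite (bigD1 x) //= xb yb eq_sym nexy Qyx.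
Qed.

(* Double counting in an STS: every pair of distinct points lies in exactly
   one block. *)
Lemma sts_pair_count v (B : {set {set 'Z_v}}) (Q : rel 'Z_v) : is_STS B ->
  (\sum_(b in B) pair_count b Q
     = \sum_(x : 'Z_v) \sum_(y : 'Z_v) ((x != y) && Q x y))%N.
Proof.
move=> [_ pair_unique]; rewrite /pair_count exchange_big; apply: eq_bigr => x _.
rewrite exchange_big; apply: eq_bigr => y _.
case: (boolP ((x != y) && Q x y)) => [/andP[nexy _] | _] /=.
- rewrite -(pair_unique x y nexy) card_set_in.
  by apply: eq_bigr => b _; rewrite andbT.
- by rewrite big1 // => b _; rewrite !andbF.
Qed.

Lemma sts_card v (B : {set {set 'Z_v}}) : is_STS B ->
  (6 * #|B| = #|'Z_v| * (#|'Z_v| - 1))%N.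
Proof.
move=> sts; have all_pairs := sts_pair_count (fun _ _ => true) sts.
rewrite -sum1_card big_distrr /= (eq_bigr (fun b => pair_count b (fun _ _ => true))).
  rewrite all_pairs -sum_nat_const; apply: eq_bigr => x _.
  by rewrite (@sum_distinct _ x predT) // sum1_card.
by move=> b /sts.1 b3; rewrite pair_count_all // b3 muln1.
Qed.

Lemma translate_comp v (b : {set 'Z_v}) d e :
  translate (translate b d) e = translate b (d + e).
Proof. by rewrite /translate -imset_comp; apply: eq_imset => x /=; rewrite addrA. Qed.

Lemma translate0 v (b : {set 'Z_v}) : translate b 0 = b.
Proof. by rewrite /translate (eq_imset _ (@addr0 _)) imset_id. Qed.

Lemma card_translate v (b : {set 'Z_v}) d : #|translate b d| = #|b|.
Proof. by apply: card_imset; apply: addIr. Qed.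

Lemma translate_fixed_mem v (b : {set 'Z_v}) d x :
  translate b d = b -> x \in b -> x + d \in b.
Proof. by move=> fix_b xb; rewrite -fix_b; apply: imset_f. Qed.

Lemma translate_fixed_mulrn v (b : {set 'Z_v}) d n :
  translate b d = b -> translate b (d *+ n) = b.
Proof.
move=> fix_b; elim: n => [|n IHn]; first by rewrite mulr0n translate0.
by rewrite mulrS addrC -translate_comp IHn.
Qed.

(* Summing the elements of a block fixed by the shift d: d has order
   dividing the size of the block. *)
Lemma translate_fixed_period v (b : {set 'Z_v}) d :
  translate b d = b -> d *+ #|b| = 0.
Proof.
move=> fix_b.
have sum_shift : \sum_(x in translate b d) x = \sum_(x in b) (x + d).
  by rewrite /translate big_imset //= => x y _ _; apply: addIr.
move: sum_shift; rewrite fix_b big_split /= sumr_const.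
by rewrite -{1}[\sum_(x in b) x]addr0 => /addrI <-.
Qed.

Lemma nonfull_orbit_stabilizer v (b : {set 'Z_v}) :
  #|block_orbit b| != #|'Z_v| -> exists2 d, d != 0 & translate b d = b.
Proof.
move=> nonfull.
case: (pickP (fun d => (d != 0) && (translate b d == b))) => [d /andP[nz /eqP fix_b] | none].
  by exists d.
case/negP: nonfull; apply/eqP/card_imset => d e same.
have fix_de : translate b (d - e) = b.
  by rewrite -translate_comp same translate_comp subrr translate0.
by apply/eqP; rewrite -subr_eq0; apply: contraFT (none (d - e)) => nz; rewrite nz fix_de /=.
Qed.

(* Blocks fixed by a non-zero shift e are few: each point x lies in at most one
   of them, namely the block through x and x + e. *)
Lemma card_fixed_blocks v (B : {set {set 'Z_v}}) (e : 'Z_v) : is_STS B -> e != 0 ->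
  (3 * #|[set b in B | translate b e == b]| <= #|'Z_v|)%N.
Proof.
move=> [B3 pair_unique] nze; set F := [set b in B | translate b e == b].
have size_F : (\sum_(b in F) #|b| = 3 * #|F|)%N.
  rewrite -sum1_card big_distrr /=; apply: eq_bigr => b.
  by rewrite inE => /andP[/B3 -> _].
rewrite -size_F (eq_bigr _ (fun b _ => esym (sum_indicator b))) exchange_big /=.
rewrite -sum1_card; apply: leq_sum => x _.
have nex : x != x + e by rewrite -{1}(addr0 x) (inj_eq (addrI x)) eq_sym.
rewrite -card_set_in -(pair_unique _ _ nex); apply: subset_leq_card.
apply/subsetP => b; rewrite !inE => /andP[/andP[bB /eqP fix_b] xb].
by rewrite bB xb (translate_fixed_mem fix_b xb).
Qed.

Definition same_class v : rel 'Z_v := fun x y => (x %% 3 == y %% 3)%N.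

Definition has_twin v (b : {set 'Z_v}) : bool :=
  [exists x, exists y, [&& x \in b, y \in b, x != y & same_class x y]].

Lemma no_twin_n_classes v (b : {set 'Z_v}) :
  #|b| = 3%N -> ~~ has_twin b -> n_classes b = 3%N.
Proof.
move=> b3 no_twin; rewrite /n_classes.
have inj_class : {in enum b &, injective (fun x : 'Z_v => (x %% 3)%N)}.
  move=> x y; rewrite !mem_enum => xb yb same; apply/eqP; apply: contraNT no_twin => nexy.
  by apply/existsP; exists x; apply/existsP; exists y; rewrite xb yb nexy /same_class same /=.
by rewrite undup_id ?size_map -?cardE // map_inj_in_uniq // enum_uniq.
Qed.

Lemma n_classes1_same_class v (b : {set 'Z_v}) :
  n_classes b = 1%N -> {in b &, forall x y, same_class x y}.
Proof.
rewrite /n_classes => one x y xb yb.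
have mem_cls z : z \in b -> (z %% 3)%N \in undup [seq (nat_of_ord u %% 3)%N | u <- enum b].
  by move=> zb; rewrite mem_undup; apply/mapP; exists z; rewrite ?mem_enum.
move: one (mem_cls x xb) (mem_cls y yb); rewrite /same_class.
by case: (undup _) => [|c [|]] //= _; rewrite !inE => /eqP -> /eqP ->.
Qed.

Lemma val_addZp v (x y : 'Z_v) : (1 < v)%N -> val (x + y) = ((val x + val y) %% v)%N.
Proof. by move=> v_gt1; congr (_ %% _)%N; apply: Zp_cast. Qed.

Lemma ltn_Zp v (x : 'Z_v) : (1 < v)%N -> (x < v)%N.
Proof. by move=> v_gt1; case: x => i /=; rewrite Zp_cast. Qed.

(* When 3 | v, reduction mod 3 is additive on Z_v, so translating a block does
   not create twins. *)
Lemma has_twin_translate v (b : {set 'Z_v}) d :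
  (1 < v)%N -> (3 %| v)%N -> has_twin (translate b d) -> has_twin b.
Proof.
move=> v_gt1 three_v /existsP[_ /existsP[_ /and4P[/imsetP[x xb ->] /imsetP[y yb ->] ne same]]].
have nexy : x != y by apply: contraNneq ne => ->.
apply/existsP; exists x; apply/existsP; exists y; rewrite xb yb nexy /=.
move: same; rewrite /same_class !val_addZp // !(modn_dvdm _ three_v).
by rewrite eqn_modDr.
Qed.

Lemma not_type3_has_twin v (b : {set 'Z_v}) :
  (1 < v)%N -> (3 %| v)%N -> #|b| = 3%N ->
  ~ orbit_of_type (block_orbit b) 3 -> has_twin b.
Proof.
move=> v_gt1 three_v b3 not_type3; case: (boolP (has_twin b)) => // no_twin.
case: not_type3 => c /imsetP[d _ ->].
apply: no_twin_n_classes; first by rewrite card_translate.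
by apply: contra no_twin; apply: has_twin_translate.
Qed.

Lemma count_residue k c : (c < 3)%N ->
  (\sum_(0 <= i < k * 3) (i %% 3 == c : nat) = k)%N.
Proof.
move=> c_lt3; elim: k => [|k IHk]; first by rewrite big_geq.
rewrite mulSnr addn3 !big_nat_recr //= IHk modnMl -[(k * 3).+2]addn2 -[(k * 3).+1]addn1 !modnMDl.
by clear IHk; case: c c_lt3 => [|[|[|]]] //= _; lia.
Qed.

Section MultipleOfThree.

Variables (v m : nat).
Hypotheses (v_eq : v = (m * 3)%N) (m_gt0 : (0 < m)%N).

Let v_gt1 : (1 < v)%N. Proof. lia. Qed.

Lemma card_Zv : #|'Z_v| = v.
Proof. by rewrite card_ord Zp_cast. Qed.

Local Notation third := (m%:R : 'Z_v).

Lemma order3_shift (d : 'Z_v) : d != 0 -> d *+ 3 = 0 -> d = third \/ d = third *+ 2.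
Proof.
move=> nzd d3.
have m_dvd : (m %| d)%N.
  have : ((d * 3)%:R : 'Z_v) = 0 by rewrite mulrnA natr_Zp.
  move/(congr1 (@nat_of_ord _)); rewrite val_Zp_nat //= => /eqP.
  by rewrite -(dvdn_pmul2r (isT : 0 < 3)%N) -v_eq.
have d_pos : (0 < d)%N by rewrite lt0n; apply: contraNneq nzd => d0; apply/eqP/val_inj.
have d_lt : (d < m * 3)%N by rewrite -v_eq ltn_Zp.
case/dvdnP: m_dvd => j dj; rewrite -(natr_Zp d) dj natrM mulr_natl.
have [-> | ->] : j = 1%N \/ j = 2%N by nia.
  by left; rewrite mulr1n.
by right.
Qed.

Lemma fixed_by_third (b : {set 'Z_v}) d :
  #|b| = 3%N -> d != 0 -> translate b d = b -> translate b third = b.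
Proof.
move=> b3 nzd fix_b; have := translate_fixed_period fix_b; rewrite b3.
case/(order3_shift nzd) => d_third; first by rewrite -d_third.
have third_twice : third = d *+ 2.
  have third3 : third *+ 3 = 0 by rewrite -mulrnA -v_eq pchar_Zp.
  by rewrite d_third -mulrnA (mulrnDr third 1 3) third3 addr0.
by rewrite third_twice translate_fixed_mulrn.
Qed.

Lemma card_nonfull_blocks (B : {set {set 'Z_v}}) : is_STS B ->
  (\sum_(b in B) (#|block_orbit b| != v : nat) <= m)%N.
Proof.
move=> sts; have nz_third : third != 0.
  by apply/eqP => /(congr1 (@nat_of_ord _)); rewrite val_Zp_nat // modn_small /=; lia.
rewrite -card_set_in -(leq_pmul2l (isT : 0 < 3)%N) [X in (_ <= X)%N]mulnC -v_eq.
have := card_fixed_blocks sts nz_third; rewrite card_Zv; apply: leq_trans.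
rewrite leq_pmul2l //; apply: subset_leq_card; apply/subsetP => b.
rewrite !inE => /andP[bB nonfull]; rewrite bB /=.
have [d nzd fix_b] : exists2 d, d != 0 & translate b d = b.
  by apply: nonfull_orbit_stabilizer; rewrite card_Zv.
by rewrite (fixed_by_third (sts.1 b bB) nzd fix_b).
Qed.

Lemma class_size (x : 'Z_v) : (\sum_(y : 'Z_v) (same_class x y : nat) = m)%N.
Proof.
rewrite (eq_bigr (fun y : 'Z_v => (y %% 3 == x %% 3)%N : nat)); last first.
  by move=> y _; rewrite /same_class eq_sym.
have := ltn_pmod x (isT : (0 < 3)%N); move: (x %% 3)%N => c c_lt3.
rewrite -(big_mkord xpredT (fun i => (i %% 3 == c)%N : nat)) Zp_cast // v_eq.
exact: count_residue.
Qed.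

(* There are v(m - 1) ordered pairs of distinct points in a common class, and
   in an STS each of them lies in exactly one block. *)
Lemma same_class_pairs (B : {set {set 'Z_v}}) : is_STS B ->
  (\sum_(b in B) pair_count b (@same_class v) = v * (m - 1))%N.
Proof.
move=> sts; rewrite sts_pair_count //.
transitivity (\sum_(x : 'Z_v) (m - 1))%N; last by rewrite sum_nat_const card_Zv.
by apply: eq_bigr => x _; rewrite sum_distinct /same_class ?eqxx // class_size.
Qed.

Theorem full_type1_impossible (B : {set {set 'Z_v}}) (b0 : {set 'Z_v}) :
  is_STS B -> (forall b, b \in B -> #|block_orbit b| = v -> has_twin b) ->
  b0 \in B -> #|block_orbit b0| = v -> n_classes b0 = 1%N -> False.
Proof.
move=> sts twins b0B full0 type1.
pose full (b : {set 'Z_v}) := #|block_orbit b| == v.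
have block_bound b : b \in B ->
    (2 * full b + 4 * (b == b0) <= pair_count b (@same_class v))%N.
  move=> bB; case: (eqVneq b b0) => [-> | _].
    by rewrite /full full0 eqxx pair_count_all ?(sts.1 b0) //; apply: n_classes1_same_class.
  rewrite muln0 addn0; case: (boolP (full b)) => [/eqP fb | _] //.
  have /existsP[x /existsP[y /and4P[xb yb nexy same]]] := twins b bB fb.
  rewrite muln1; apply: (pair_count_ge2 xb yb nexy same).
  by rewrite /same_class eq_sym.
have total_bound : (\sum_(b in B) (2 * full b + 4 * (b == b0))
                     <= \sum_(b in B) pair_count b (@same_class v))%N.
  exact: leq_sum.
have only_b0 : (\sum_(b in B) (b == b0 : nat) = 1)%N.
  by rewrite (bigD1 b0) //= eqxx big1 // => b /andP[_ /negbTE ->].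
rewrite big_split /= -!big_distrr /= only_b0 same_class_pairs // in total_bound.
have split_B : (\sum_(b in B) (full b : nat) + \sum_(b in B) (~~ full b : nat) = #|B|)%N.
  by rewrite -big_split -sum1_card; apply: eq_bigr => b _; case: (full b).
have nonfull_bound : (\sum_(b in B) (~~ full b : nat) <= m)%N := card_nonfull_blocks sts.
(* With F full and N non-full blocks: 2F + 4 <= v(m - 1), F + N = |B|, N <= m
   and 6|B| = v(v - 1); for v = 3m these are inconsistent. *)
have := sts_card sts; rewrite card_Zv.
move: total_bound split_B nonfull_bound.
move: (\sum_(b in B) (full b : nat)) (\sum_(b in B) (~~ full b : nat)) #|B| => F N A.
nia.
Qed.

End MultipleOfThree.

Theorem mainTheorem4 (v : nat) (B : {set {set 'Z_v}}) :
  (v %% 18 = 3 \/ v %% 18 = 15)%N ->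
  is_STS B -> is_cyclic B ->
  (forall b, b \in B -> full_orbit b -> ~ orbit_of_type (block_orbit b) 3) ->
  forall b, b \in B -> full_orbit b -> ~ orbit_of_type (block_orbit b) 1.
Proof.
move=> v_mod sts _ not_type3 b0 b0B full0 type1.
have v_eq : v = (v %/ 3 * 3)%N by lia.
have m_gt0 : (0 < v %/ 3)%N by lia.
apply: (full_type1_impossible v_eq m_gt0 sts _ b0B full0).
  move=> b bB fb; apply: not_type3_has_twin (sts.1 b bB) (not_type3 b bB fb); lia.
by apply: type1; apply/imsetP; exists 0; rewrite ?translate0.
Qed.
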